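(* Consider a bipartite experiment where Alice chooses $x\in\{0,1\}$ and obtains $a\in\{\pm1\}$ with probability $\pi_{a|x}:=p(a|x)$, and conditioned on $(a,x)$ Bob's system is in the qubit state $\rho_{a|x}=\tfrac12(I+\mathbf s_{a|x}\cdot\boldsymbol\sigma)$ with Bloch vector $\mathbf s_{a|x}\in\mathbb R^3$, $\|\mathbf s_{a|x}\|\le1$. Bob chooses $y\in\{0,1\}$ and performs the binary projective measurement with observable $B_y=\mathbf b_y\cdot\boldsymbol\sigma$, $\|\mathbf b_y\|=1$, obtaining $b\in\{\pm1\}$, so that $p(a,b|x,y)=\pi_{a|x}\,\mathrm{Tr}\big(\rho_{a|x}\tfrac{I+bB_y}{2}\big)$. Let $E_{xy}=\sum_{a,b=\pm1}ab\,p(a,b|x,y)$ and $S_{\mathrm{CHSH}}=E_{00}+E_{01}+E_{10}-E_{11}$. For a pair of qubit states let the SWAP-test pass probability be $p(\mathsf{pass}|\rho,\sigma)=\tfrac12(1+\mathrm{Tr}(\rho\sigma))$, and define $$p_{\mathrm{pur}}^{\pm|x}=p(\mathsf{pass}|\rho_{\pm|x},\rho_{\pm|x}),\qquad p_{\mathrm{ov}}^{x}=p(\mathsf{pass}|\rho_{+|x},\rho_{-|x}),$$ $$\widetilde R_x^2:=2\Big[\pi_{+|x}^2(2p_{\mathrm{pur}}^{+|x}-1)+\pi_{-|x}^2(2p_{\mathrm{pur}}^{-|x}-1)-2\pi_{+|x}\pi_{-|x}(2p_{\mathrm{ov}}^{x}-1)\Big]-(\pi_{+|x}-\pi_{-|x})^2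 .$$ Then $$S_{\mathrm{CHSH}}\le 2\sqrt{\widetilde R_0^2+\widetilde R_1^2}.$$
   Context: $\boldsymbol\sigma=(\sigma_x,\sigma_y,\sigma_z)$ is the vector of Pauli matrices. $\widetilde R_x^2$ is called the weighted operational separation parameter of Bob's two conditional preparations at Alice's setting $x$. *)

From HB Require Import structures.
From mathcomp Require Import all_boot all_order all_algebra.
From mathcomp Require Import complex.
Set Implicit Arguments. Unset Strict Implicit. Unset Printing Implicit Defensive.
Import Order.TTheory GRing.Theory Num.Theory.
Local Open Scope ring_scope.

Section Qubit.
Variable R : rcfType.
Local Notation C := (complex R).

Definition cR (x : R) : C := Complex x 0.
Definition cI : C := Complex 0 1.

Definition sigma_x : 'M[C]_2 := \matrix_(i < 2, j < 2) if i == j then 0 else 1.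
Definition sigma_y : 'M[C]_2 :=
  \matrix_(i < 2, j < 2) if i == j then 0 else if (i : nat) == 0%N then - cI else cI.
Definition sigma_z : 'M[C]_2 :=
  \matrix_(i < 2, j < 2) if i == j then (if (i : nat) == 0%N then 1 else -1) else 0.
Definition pauli (k : 'I_3) : 'M[C]_2 :=
  if (k : nat) == 0%N then sigma_x else if (k : nat) == 1%N then sigma_y else sigma_z.

Definition dot_sigma (v : 'rV[R]_3) : 'M[C]_2 := \sum_(k < 3) cR (v ord0 k) *: pauli k.

Definition sqnorm3 (v : 'rV[R]_3) : R := \sum_(k < 3) v ord0 k ^+ 2.

Definition bloch_state (s : 'rV[R]_3) : 'M[C]_2 := cR (2^-1) *: (1%:M + dot_sigma s).

(* outcome +1 encoded by true, -1 by false *)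
Definition sgnb (b : bool) : R := if b then 1 else -1.

(* Real part of the trace (the traces below are real) *)
Definition retr (M : 'M[C]_2) : R := complex.Re (\tr M).

Definition pjoint (pi : bool -> bool -> R) (s : bool -> bool -> 'rV[R]_3)
  (bv : bool -> 'rV[R]_3) (a b x y : bool) : R :=
  pi x a * retr (bloch_state (s x a) *m (cR (2^-1) *: (1%:M + cR (sgnb b) *: dot_sigma (bv y)))).

Definition corrE pi s bv (x y : bool) : R :=
  \sum_(a : bool) \sum_(b : bool) sgnb a * sgnb b * pjoint pi s bv a b x y.

(* x = 0 encoded by false, x = 1 by true *)
Definition S_CHSH pi s bv : R :=
  corrE pi s bv false false + corrE pi s bv false true
  + corrE pi s bv true false - corrE pi s bv true true.

Definition ppass (rho sig : 'M[C]_2) : R := (1 + retr (rho *m sig)) / 2.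

Definition ppur (s : bool -> bool -> 'rV[R]_3) (a x : bool) : R :=
  ppass (bloch_state (s x a)) (bloch_state (s x a)).
Definition pov (s : bool -> bool -> 'rV[R]_3) (x : bool) : R :=
  ppass (bloch_state (s x true)) (bloch_state (s x false)).

Definition Rt2 (pi : bool -> bool -> R) (s : bool -> bool -> 'rV[R]_3) (x : bool) : R :=
  2 * (pi x true ^+ 2 * (2 * ppur s true x - 1) + pi x false ^+ 2 * (2 * ppur s false x - 1)
       - 2 * pi x true * pi x false * (2 * pov s x - 1))
  - (pi x true - pi x false) ^+ 2.

End Qubit.

(* For Bloch vectors u, v one has Tr(rho_u rho_v) = (1 + u.v)/2, because the Pauli
   matrices are traceless and trace-orthogonal.  Hence E_xy = c_x . b_y for the vector
   c_x = pi_{+|x} s_{+|x} - pi_{-|x} s_{-|x}, and R~_x^2 = |c_x|^2.  Then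
   S = c_0 . (b_0 + b_1) + c_1 . (b_0 - b_1), and Cauchy-Schwarz in R^6 together with
   the parallelogram law |b_0 + b_1|^2 + |b_0 - b_1|^2 = 4 gives S <= 2 sqrt(|c_0|^2 + |c_1|^2). *)

From HB Require Import structures.
From mathcomp Require Import all_boot all_order all_algebra.
From mathcomp Require Import complex ring.
Set Implicit Arguments. Unset Strict Implicit. Unset Printing Implicit Defensive.
Import Order.TTheory GRing.Theory Num.Theory.
Local Open Scope ring_scope.

Section VectorDot.
Variables (R : comPzRingType) (n : nat).
Implicit Types u v w : 'rV[R]_n.

Definition vdot u v : R := \sum_i u 0 i * v 0 i.

Lemma vdotC u v : vdot u v = vdot v u.
Proof. by apply: eq_bigr => i _; rewrite mulrC. Qed.

Lemma vdotDl u v w : vdot (u + v) w = vdot u w + vdot v w.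
Proof. by rewrite -big_split; apply: eq_bigr => i _; rewrite mxE mulrDl. Qed.

Lemma vdotNl u w : vdot (- u) w = - vdot u w.
Proof. by rewrite -sumrN; apply: eq_bigr => i _; rewrite mxE mulNr. Qed.

Lemma vdotBl u v w : vdot (u - v) w = vdot u w - vdot v w.
Proof. by rewrite vdotDl vdotNl. Qed.

Lemma vdotZl a u w : vdot (a *: u) w = a * vdot u w.
Proof. by rewrite mulr_sumr; apply: eq_bigr => i _; rewrite mxE mulrA. Qed.

Lemma vdotDr u v w : vdot u (v + w) = vdot u v + vdot u w.
Proof. by rewrite ![vdot u _]vdotC vdotDl. Qed.

Lemma vdotBr u v w : vdot u (v - w) = vdot u v - vdot u w.
Proof. by rewrite ![vdot u _]vdotC vdotBl. Qed.

Lemma vdotZr a u w : vdot u (a *: w) = a * vdot u w.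
Proof. by rewrite ![vdot u _]vdotC vdotZl. Qed.

Lemma vdot_parallelogram u v :
  vdot (u + v) (u + v) + vdot (u - v) (u - v) = (vdot u u + vdot v v) *+ 2.
Proof. rewrite !(vdotBl, vdotBr, vdotDl, vdotDr) [vdot v u]vdotC; ring. Qed.

Lemma vdot_Lagrange u w :
  (vdot u u * vdot w w - vdot u w ^+ 2) *+ 2
  = \sum_i \sum_j (u 0 i * w 0 j - u 0 j * w 0 i) ^+ 2.
Proof.
have sq_diff i j : (u 0 i * w 0 j - u 0 j * w 0 i) ^+ 2
    = u 0 i * u 0 i * (w 0 j * w 0 j) + u 0 j * u 0 j * (w 0 i * w 0 i)
      - (u 0 i * w 0 i * (u 0 j * w 0 j)) *+ 2 by ring.
under eq_bigr => i _ do under eq_bigr => j _ do rewrite sq_diff.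
under eq_bigr => i _ do rewrite sumrB big_split /=.
rewrite sumrB big_split /= [X in _ + X - _]exchange_big /=.
under [X in _ = _ - X]eq_bigr => i _ do rewrite sumrMnl.
by rewrite sumrMnl /vdot expr2 !big_distrlr mulrnBl mulr2n.
Qed.

End VectorDot.

Lemma vdot_row_mx (R : comPzRingType) m n (u u' : 'rV[R]_m) (w w' : 'rV[R]_n) :
  vdot (row_mx u w) (row_mx u' w') = vdot u u' + vdot w w'.
Proof.
rewrite /vdot big_split_ord /=.
by congr (_ + _); apply: eq_bigr => i _; rewrite ?row_mxEl ?row_mxEr.
Qed.

Section VectorCauchySchwarz.
Variables (R : realDomainType) (n : nat).
Implicit Types u w : 'rV[R]_n.

Lemma vdot_ge0 u : 0 <= vdot u u.
Proof. by apply: sumr_ge0 => i _; rewrite -expr2 sqr_ge0. Qed.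

Lemma vdot_sqr_le u w : vdot u w ^+ 2 <= vdot u u * vdot w w.
Proof.
rewrite -subr_ge0 -(pmulrn_lge0 _ (ltn0Sn 1)) vdot_Lagrange.
by do 2![apply: sumr_ge0 => ? _]; apply: sqr_ge0.
Qed.

End VectorCauchySchwarz.

Lemma vdot_le_sqrt (R : rcfType) n (u w : 'rV[R]_n) :
  vdot u w <= Num.sqrt (vdot u u) * Num.sqrt (vdot w w).
Proof.
rewrite -sqrtrM ?vdot_ge0 // (le_trans (ler_norm _)) // -sqrtr_sqr.
by rewrite ler_sqrt ?vdot_sqr_le // mulr_ge0 ?vdot_ge0.
Qed.

Lemma vdot_add_le_sqrt (R : rcfType) n (u0 u1 w0 w1 : 'rV[R]_n) :
  vdot u0 w0 + vdot u1 w1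
  <= Num.sqrt (vdot u0 u0 + vdot u1 u1) * Num.sqrt (vdot w0 w0 + vdot w1 w1).
Proof. by rewrite -!vdot_row_mx vdot_le_sqrt. Qed.

Section Qubit.
Variable R : rcfType.
Local Notation pauli := (pauli R).
Implicit Types (u v : 'rV[R]_3) (pi : bool -> bool -> R).
Implicit Types (s : bool -> bool -> 'rV[R]_3) (bv : bool -> 'rV[R]_3).

Lemma cRE (x : R) : cR x = real_complex R x. Proof. by []. Qed.

Lemma mxtrace_pauli (k : 'I_3) : \tr (pauli k) = 0.
Proof.
rewrite /mxtrace /pauli.
by case: k => [[|[|[|//]]] ?]; rewrite !big_ord_recr big_ord0 !mxE /=; simpc.
Qed.

Lemma mxtrace_pauli_mul (k l : 'I_3) : \tr (pauli k *m pauli l) = cR ((k == l)%:R *+ 2).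
Proof.
rewrite /mxtrace /pauli.
case: k => [[|[|[|//]]] ?]; case: l => [[|[|[|//]]] ?];
  rewrite !big_ord_recr !big_ord0 !mxE !big_ord_recr !big_ord0 !mxE /= /cI; simpc;
  by congr Complex; ring.
Qed.

Lemma mxtrace_dot_sigma v : \tr (dot_sigma v) = 0.
Proof.
by rewrite /dot_sigma raddf_sum big1 //= => k _; rewrite mxtraceZ mxtrace_pauli mulr0.
Qed.

Lemma mxtrace_dot_sigma_mul u v : \tr (dot_sigma u *m dot_sigma v) = cR (vdot u v *+ 2).
Proof.
rewrite /dot_sigma mulmx_suml raddf_sum /= /vdot -sumrMnl cRE rmorph_sum /=.
apply: eq_bigr => k _; rewrite mulmx_sumr raddf_sum /= (bigD1 k) //= big1 => [|l /negPf lk].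
  rewrite -scalemxAl -scalemxAr !mxtraceZ mxtrace_pauli_mul eqxx !cRE -!rmorphM.
  by rewrite addr0 mulr1n !mulrnAr mulr1.
by rewrite -scalemxAl -scalemxAr !mxtraceZ mxtrace_pauli_mul eq_sym lk mul0rn !mulr0.
Qed.

Lemma mxtrace_affine_dot_sigma_mul (a b : R) u v :
  \tr ((1%:M + cR a *: dot_sigma u) *m (1%:M + cR b *: dot_sigma v))
  = cR ((1 + a * b * vdot u v) *+ 2).
Proof.
rewrite mulmxDl !mulmxDr !mul1mx mulmx1 -scalemxAl -scalemxAr !mxtraceD !mxtraceZ.
rewrite mxtrace1 !mxtrace_dot_sigma mxtrace_dot_sigma_mul !mulr0 !addr0 /cR.
by simpc; congr Complex; ring.
Qed.

Lemma retr_scaled_affine_dot_sigma_mul (c d a b : R) u v :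
  retr ((cR c *: (1%:M + cR a *: dot_sigma u)) *m (cR d *: (1%:M + cR b *: dot_sigma v)))
  = c * d * (1 + a * b * vdot u v) *+ 2.
Proof.
rewrite /retr -scalemxAl -scalemxAr !mxtraceZ mxtrace_affine_dot_sigma_mul /cR /=.
by ring.
Qed.

Lemma bloch_stateE u : bloch_state u = cR 2^-1 *: (1%:M + cR 1 *: dot_sigma u).
Proof. by rewrite /bloch_state scale1r. Qed.

Lemma retr_bloch_mul u v : retr (bloch_state u *m bloch_state v) = (1 + vdot u v) / 2.
Proof. by rewrite !bloch_stateE retr_scaled_affine_dot_sigma_mul; field. Qed.

Lemma sqnorm3E v : sqnorm3 v = vdot v v.
Proof. by apply: eq_bigr => k _; rewrite expr2. Qed.

Lemma pjointE pi s bv a b x y :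
  pjoint pi s bv a b x y = pi x a * (1 + @sgnb R b * vdot (s x a) (bv y)) / 2.
Proof. by rewrite /pjoint bloch_stateE retr_scaled_affine_dot_sigma_mul; field. Qed.

Definition sep_vec pi s x : 'rV[R]_3 := pi x true *: s x true - pi x false *: s x false.

Lemma corrE_sep pi s bv x y : corrE pi s bv x y = vdot (sep_vec pi s x) (bv y).
Proof.
rewrite /corrE !big_bool /= !pjointE /sep_vec vdotBl !vdotZl /sgnb.
by field.
Qed.

Lemma Rt2_sep pi s x : Rt2 pi s x = vdot (sep_vec pi s x) (sep_vec pi s x).
Proof.
rewrite /Rt2 /ppur /pov /ppass !retr_bloch_mul /sep_vec.
rewrite !(vdotBl, vdotBr, vdotZl, vdotZr) [vdot (s x false) (s x true)]vdotC.
by field.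
Qed.

Lemma S_CHSH_sep pi s bv : S_CHSH pi s bv
  = vdot (sep_vec pi s false) (bv false + bv true)
    + vdot (sep_vec pi s true) (bv false - bv true).
Proof. rewrite /S_CHSH !corrE_sep vdotDr vdotBr; ring. Qed.

End Qubit.

Theorem theorem2 (R : rcfType) (pi : bool -> bool -> R)
  (s : bool -> bool -> 'rV[R]_3) (bv : bool -> 'rV[R]_3)
  (pi_ge0 : forall x a, 0 <= pi x a)
  (pi_sum1 : forall x, pi x true + pi x false = 1)
  (s_le1 : forall x a, sqnorm3 (s x a) <= 1)
  (bv_unit : forall y, sqnorm3 (bv y) = 1) :
  S_CHSH pi s bv <= 2 * Num.sqrt (Rt2 pi s false + Rt2 pi s true).
Proof.
have sqrt4 : Num.sqrt ((1 + 1) *+ 2) = 2 :> R.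
  by rewrite -[X in Num.sqrt X](_ : 2 ^+ 2 = _) ?sqrtr_sqr ?ger0_norm //; ring.
rewrite S_CHSH_sep !Rt2_sep mulrC.
apply: le_trans (vdot_add_le_sqrt _ _ _ _) _.
by rewrite vdot_parallelogram -!sqnorm3E !bv_unit sqrt4.
Qed.
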